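(* Fix $\omega>0$. For every $s\in\mathbb Z$, the reflection $(B,A)\mapsto(B,-A)$ maps each of the curves $\partial L_{s,+}$, $\partial L_{s,-}$ to itself if $s$ is even, and interchanges $\partial L_{s,+}$ and $\partial L_{s,-}$ if $s$ is odd. In particular, for every even $s$ the curves $\partial L_{s,\pm}$ are orthogonal to the $B$-axis at the growth point of $L_s$. The reflection $(B,A)\mapsto(-B,A)$ maps $\partial L_{s,\pm}$ onto $\partial L_{-s,\mp}$ for even $s$, and maps $\partial L_{s,\pm}$ onto $\partial L_{-s,\pm}$ for odd $s$.
   Context: For $(B,A)\in\mathbb R^2$ consider $\frac{d\varphi}{dt}=-\sin\varphi+B+A\cos\omega t$; with $\tau=\omega t$, $l=B/\omega$, $\mu=A/(2\omega)$ this gives the vector field $\dot\varphi=-\frac{\sin\varphi}{\omega}+l+2\mu\cos\tau$, $\dot\tau=1$ on the torus $\mathbb R^2/2\pi\mathbb Z^2$ with coordinates $(\varphi,\tau)$. The rotation number is $\rho(B,A;\omega)=\lim_{k\to+\infty}\varphi(2\pi k)/(2\pi k)$; for $s\in\mathbb Z$, $L_s=\{\rho=s\}\subset\mathbb R^2_{(B,A)}$ is the phase-lock area. The Poincaré map $h_{(B,A)}$ is the time-$2\pi$ flow map on the circle $\{\tau=0\}$. $\partial L_{s,\pm}$ denotes the set of points of $L_s$ at which $h_{(B,A)}$ fixes $\pm\frac\pi2\pmod{2\pi}$; it is known that $\partial L_s=\partial L_{s,+}\cup\partial L_{s,-}$ and each $\partial L_{s,\pm}$ is the graph of an analytic function $B=g_{s,\pm}(A)$.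 The growth point of $L_s$ is its intersection point with the $B$-axis $\{A=0\}$. *)

From Stdlib Require Import Reals ZArith Lra.
From Coquelicot Require Import Coquelicot.
Open Scope R_scope.

(* The vector field on the torus in the time tau = omega t:
   dphi/dtau = - sin phi / omega + l + 2 mu cos tau,
   with l = B / omega and mu = A / (2 omega). *)
Definition field (omega B A : R) (phi tau : R) : R :=
  - sin phi / omega + B / omega + 2 * (A / (2 * omega)) * cos tau.

(* A (global) solution phi : R -> R of the equation (lift to R of the
   phi-coordinate, parametrized by tau). *)
Definition is_solution (omega B A : R) (phi : R -> R) : Prop :=
  forall tau : R, is_derive phi tau (field omega B A (phi tau) tau).

Definition rotation_number_is (omega B A r : R) : Prop :=
  (exists phi, is_solution omega B A phi) /\
  forall phi, is_solution omega B A phi ->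
    is_lim_seq (fun k : nat => phi (2 * PI * INR k) / (2 * PI * INR k)) r.

Definition L (omega : R) (s : Z) (B A : R) : Prop :=
  rotation_number_is omega B A (IZR s).

(* Graph of the Poincare map (time-2pi flow map on {tau = 0}), on the lift. *)
Definition poincare (omega B A x y : R) : Prop :=
  exists phi, is_solution omega B A phi /\ phi 0 = x /\ phi (2 * PI) = y.

Definition fixes_mod (omega B A x : R) : Prop :=
  exists m : Z, poincare omega B A x (x + 2 * PI * IZR m).

Definition half_pi (plus : bool) : R := if plus then PI / 2 else - (PI / 2).

Definition bdry (omega : R) (s : Z) (plus : bool) (B A : R) : Prop :=
  L omega s B A /\ fixes_mod omega B A (half_pi plus).

From Stdlib Require Import Reals ZArith Lra Lia.
From Coquelicot Require Import Coquelicot.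
Open Scope R_scope.

(* The reflections come from symmetries of the equation on the torus:
   (phi, tau) |-> (phi, tau + pi) conjugates the field for (B, A) with the one
   for (B, -A), and (phi, tau) |-> (-phi, tau + pi) the one for (B, A) with the
   one for (-B, A); rotation numbers are preserved up to sign. If (B, A) lies on
   dL_{s,+-}, the solution starting at +-pi/2 satisfies
   phi (tau + 2 pi) = phi tau + 2 pi s, and the involution
   (phi, tau) |-> (+-pi - phi, -tau), which preserves the equation and fixes its
   initial point, forces phi pi = +-pi/2 + pi s by uniqueness. So the conjugated
   solution starts at +-pi/2 + pi s (resp. its opposite), which is +-pi/2 for
   even s and -+pi/2 for odd s modulo 2 pi. Orthogonality at the growth point
   holds because g is then even. *)

Lemma is_derive_continuity_pt (f : R -> R) x l : is_derive f x l -> continuity_pt f x.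
Proof.
  intro H. apply continuity_pt_filterlim.
  apply (ex_derive_continuous (V := R_NormedModule)). now exists l.
Qed.

Lemma Rabs_sub_le_of_is_derive (f df : R -> R) M :
  (forall x, is_derive f x (df x)) -> (forall x, Rabs (df x) <= M) ->
  forall a b, Rabs (f b - f a) <= M * Rabs (b - a).
Proof.
  intros Hf HM a b.
  destruct (MVT_gen f a b df) as [c [_ ->]].
  - intros; apply Hf.
  - intros; eapply is_derive_continuity_pt; apply Hf.
  - rewrite Rabs_mult. apply Rmult_le_compat_r; [apply Rabs_pos | apply HM].
Qed.

Lemma nonincreasing_of_is_derive (f df : R -> R) :
  (forall x, is_derive f x (df x)) -> (forall x, df x <= 0) ->
  forall a b, a <= b -> f b <= f a.
Proof.
  intros Hf Hdf a b Hab.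
  destruct (MVT_gen f a b df) as [c [_ Hc]].
  - intros; apply Hf.
  - intros; eapply is_derive_continuity_pt; apply Hf.
  - specialize (Hdf c). nra.
Qed.

Lemma gronwall_eq0_forward (d d' : R -> R) K t0 :
  (forall t, is_derive d t (d' t)) -> (forall t, Rabs (d' t) <= K * Rabs (d t)) ->
  d t0 = 0 -> forall t, t0 <= t -> d t = 0.
Proof.
  intros Hd Hbound H0 t Ht.
  (* [d^2 e^{-2Kt}] is nonincreasing, and vanishes at [t0]. *)
  set (E := fun s => d s ^ 2 * exp (- (2 * K) * s)).
  assert (HE : E t <= E t0).
  { apply (nonincreasing_of_is_derive E
      (fun s => 2 * exp (- (2 * K) * s) * (d s * d' s - K * d s ^ 2))); [| |exact Ht].
    - intro s. unfold E. auto_derive.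
      + now exists (d' s).
      + change (fun x => d x) with d. rewrite (is_derive_unique d s _ (Hd s)). ring.
    - intro s. pose proof (exp_pos (- (2 * K) * s)).
      assert (d s * d' s <= K * d s ^ 2).
      { rewrite <- Rsqr_pow2, Rsqr_abs. unfold Rsqr.
        eapply Rle_trans; [apply Rle_abs|]. rewrite Rabs_mult.
        replace (K * (Rabs (d s) * Rabs (d s))) with (Rabs (d s) * (K * Rabs (d s))) by ring.
        apply Rmult_le_compat_l; [apply Rabs_pos | apply Hbound]. }
      nra. }
  unfold E in HE. rewrite H0, pow_i, Rmult_0_l in HE by lia.
  apply Rsqr_0_uniq. rewrite Rsqr_pow2. apply Rle_antisym; [|apply pow2_ge_0].
  apply (Rmult_le_reg_r (exp (- (2 * K) * t))); [apply exp_pos | lra].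
Qed.

Lemma gronwall_eq0 (d d' : R -> R) K t0 :
  (forall t, is_derive d t (d' t)) -> (forall t, Rabs (d' t) <= K * Rabs (d t)) ->
  d t0 = 0 -> forall t, d t = 0.
Proof.
  intros Hd Hbound H0 t. destruct (Rle_dec t0 t).
  - now apply (gronwall_eq0_forward d d' K t0).
  - rewrite <- (Ropp_involutive t).
    apply (gronwall_eq0_forward (fun s => d (- s)) (fun s => - d' (- s)) K (- t0));
      [| | now rewrite Ropp_involutive | lra].
    + intro s. auto_derive.
      * now exists (d' (- s)).
      * change (fun x => d x) with d. rewrite (is_derive_unique d _ _ (Hd (- s))). ring.
    + intro s. rewrite Rabs_Ropp. apply Hbound.
Qed.

Lemma sin_lipschitz a b : Rabs (sin a - sin b) <= Rabs (a - b).
Proof.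
  rewrite <- (Rmult_1_l (Rabs (a - b))).
  apply (Rabs_sub_le_of_is_derive sin cos).
  - intro x. auto_derive; [easy | ring].
  - intro x. apply Rabs_le, COS_bound.
Qed.

Lemma sin_add_2PI_mul x m : sin (x + 2 * PI * IZR m) = sin x.
Proof.
  destruct (Z_le_gt_dec 0 m) as [Hm | Hm].
  - rewrite <- (Z2Nat.id m), <- INR_IZR_INZ by lia.
    rewrite <- (sin_period x (Z.to_nat m)). f_equal. ring.
  - replace m with (- Z.of_nat (Z.to_nat (- m)))%Z by lia.
    rewrite opp_IZR, <- INR_IZR_INZ.
    rewrite <- (sin_period (x + 2 * PI * - INR (Z.to_nat (- m))) (Z.to_nat (- m))).
    f_equal. ring.
Qed.

Lemma sin_2half_pi_sub b y : sin (2 * half_pi b - y) = sin y.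
Proof.
  destruct b; unfold half_pi.
  - replace (2 * (PI / 2) - y) with (PI - y) by field. apply sin_PI_x.
  - replace (2 * - (PI / 2) - y) with (- (y + PI)) by field.
    rewrite sin_neg, neg_sin. ring.
Qed.

Lemma half_pi_negb b : half_pi (negb b) = - half_pi b.
Proof. destruct b; simpl; ring. Qed.

Lemma half_pi_add_PI_mul s b :
  exists j, half_pi (xorb (Z.odd s) b) = half_pi b + PI * IZR s + 2 * PI * IZR j.
Proof.
  destruct (Z.Even_or_Odd s) as [[k ->] | [k ->]];
    rewrite ?Z.odd_add, Z.odd_mul, ?plus_IZR, mult_IZR; destruct b; simpl; unfold half_pi.
  - exists (- k)%Z. rewrite opp_IZR. field.
  - exists (- k)%Z. rewrite opp_IZR. field.
  - exists (- k - 1)%Z. rewrite minus_IZR, opp_IZR. field.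
  - exists (- k)%Z. rewrite opp_IZR. field.
Qed.

Lemma is_lim_seq_div_bounded_diff (u v w : nat -> R) M (r : R) :
  is_lim_seq w p_infty -> (forall k, Rabs (v k - u k) <= M) ->
  is_lim_seq (fun k => u k / w k) r -> is_lim_seq (fun k => v k / w k) r.
Proof.
  intros Hw Hvu Hu.
  assert (Hdiff : is_lim_seq (fun k => (v k - u k) / w k) 0).
  { apply is_lim_seq_abs_0.
    apply is_lim_seq_le_le with (u := fun _ => 0) (w := fun k => M * / Rabs (w k)).
    - intro k. split; [apply Rabs_pos|].
      unfold Rdiv. rewrite Rabs_mult, Rabs_inv.
      apply Rmult_le_compat_r; [|apply Hvu].
      destruct (Req_dec (Rabs (w k)) 0) as [-> | Hnz]; [rewrite Rinv_0; lra|].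
      left. apply Rinv_0_lt_compat. pose proof (Rabs_pos (w k)). lra.
    - apply is_lim_seq_const.
    - replace (Finite 0) with (Rbar_mult M (Rbar_inv (Rbar_abs p_infty)))
        by (simpl; f_equal; ring).
      apply is_lim_seq_scal_l, is_lim_seq_inv; [now apply is_lim_seq_abs | discriminate]. }
  apply is_lim_seq_ext with (u := fun k => u k / w k + (v k - u k) / w k).
  { intro k. unfold Rdiv. ring. }
  replace (Finite r) with (Rbar_plus r 0) by (simpl; f_equal; ring).
  now apply is_lim_seq_plus'.
Qed.

Lemma is_lim_seq_2PI_INR : is_lim_seq (fun k => 2 * PI * INR k) p_infty.
Proof.
  replace p_infty with (Rbar_mult (2 * PI) p_infty)
    by (apply is_Rbar_mult_unique, is_Rbar_mult_sym, is_Rbar_mult_p_infty_pos;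
        simpl; pose proof PI_RGT_0; lra).
  apply is_lim_seq_scal_l, is_lim_seq_INR.
Qed.

Lemma is_derive_0_of_even (g : R -> R) :
  (forall x, g (- x) = g x) -> ex_derive g 0 -> is_derive g 0 0.
Proof.
  intros Heven [l Hl].
  assert (Hopp : is_derive g 0 (- l)).
  { apply is_derive_ext with (f := fun x => g (- x)); [exact Heven|].
    replace (- l) with (scal (-1) l) by (cbn; unfold mult; cbn; ring).
    apply (is_derive_comp g (fun x => - x)).
    - now rewrite Ropp_0.
    - auto_derive; [easy | ring]. }
  replace 0 with l at 2; [exact Hl|].
  pose proof (is_derive_unique _ _ _ Hl). pose proof (is_derive_unique _ _ _ Hopp). lra.
Qed.

Section FixedFrequency.

Variable omega : R.
Hypothesis homega : 0 < omega.

Lemma field_lipschitz B A x y t :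
  Rabs (field omega B A x t - field omega B A y t) <= / omega * Rabs (x - y).
Proof.
  unfold field.
  replace (_ - _) with (/ omega * (sin y - sin x)) by (field; lra).
  assert (0 < / omega) by (apply Rinv_0_lt_compat; lra).
  rewrite Rabs_mult, Rabs_right, Rabs_minus_sym by lra.
  apply Rmult_le_compat_l; [lra | apply sin_lipschitz].
Qed.

Lemma field_bounded B A x t :
  Rabs (field omega B A x t) <= (1 + Rabs B + Rabs A) / omega.
Proof.
  unfold field.
  replace (_ + _) with ((- sin x + B + A * cos t) / omega) by (field; lra).
  assert (0 < / omega) by (apply Rinv_0_lt_compat; lra).
  unfold Rdiv. rewrite Rabs_mult, (Rabs_right (/ omega)) by lra.
  apply Rmult_le_compat_r; [lra|].
  eapply Rle_trans; [apply Rabs_triang|].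
  eapply Rle_trans; [apply Rplus_le_compat_r, Rabs_triang|].
  rewrite Rabs_Ropp, Rabs_mult.
  assert (Rabs (sin x) <= 1) by apply Rabs_le, SIN_bound.
  assert (Rabs (cos t) <= 1) by apply Rabs_le, COS_bound.
  pose proof (Rabs_pos A). nra.
Qed.

Lemma is_solution_unique B A phi1 phi2 t0 :
  is_solution omega B A phi1 -> is_solution omega B A phi2 ->
  phi1 t0 = phi2 t0 -> forall t, phi1 t = phi2 t.
Proof.
  intros H1 H2 H0 t. apply Rminus_diag_uniq.
  apply (gronwall_eq0 (fun s => phi1 s - phi2 s)
    (fun s => field omega B A (phi1 s) s - field omega B A (phi2 s) s) (/ omega) t0).
  - intro s. apply (is_derive_minus phi1 phi2); [apply H1 | apply H2].
  - intro s. apply field_lipschitz.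
  - lra.
Qed.

Lemma is_solution_lipschitz B A phi : is_solution omega B A phi ->
  exists C, forall a b, Rabs (phi b - phi a) <= C * Rabs (b - a).
Proof.
  intro H. exists ((1 + Rabs B + Rabs A) / omega).
  apply (Rabs_sub_le_of_is_derive phi (fun t => field omega B A (phi t) t)); [exact H|].
  intro t. apply field_bounded.
Qed.

Lemma is_solution_affine B A B' A' phi psi e e' c v :
  is_solution omega B A phi ->
  (forall t, psi t = e * phi (e' * t + c) + v) ->
  (forall t x, e * e' * field omega B A x (e' * t + c) = field omega B' A' (e * x + v) t) ->
  is_solution omega B' A' psi.
Proof.
  intros H Hpsi Hfield t.
  apply is_derive_ext with (f := fun t => e * phi (e' * t + c) + v); [now intro|].
  rewrite Hpsi, <- Hfield. auto_derive.
  - now exists (field omega B A (phi (e' * t + c)) (e' * t + c)).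
  - change (fun x => phi x) with phi. rewrite (is_derive_unique phi _ _ (H (e' * t + c))). ring.
Qed.

Lemma is_solution_shift_2PI B A phi j : is_solution omega B A phi ->
  is_solution omega B A (fun t => phi (t + 2 * PI) + 2 * PI * IZR j).
Proof.
  intro H. apply (is_solution_affine B A B A phi _ 1 1 (2 * PI) (2 * PI * IZR j) H).
  - intro t. now rewrite !Rmult_1_l.
  - intros t x. unfold field.
    rewrite !Rmult_1_l, sin_add_2PI_mul, cos_plus, cos_2PI, sin_2PI. field. lra.
Qed.

Lemma is_solution_half_turn B A phi e j : e = 1 \/ e = -1 ->
  is_solution omega B A phi ->
  is_solution omega (e * B) (- (e * A)) (fun t => e * phi (t + PI) + 2 * PI * IZR j).
Proof.
  intros he H. apply (is_solution_affine B A _ _ phi _ e 1 PI (2 * PI * IZR j) H).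
  - intro t. now rewrite Rmult_1_l.
  - intros t x. unfold field.
    assert (Hsin : sin (e * x) = e * sin x).
    { destruct he as [-> | ->]; [now rewrite !Rmult_1_l|].
      replace (-1 * x) with (- x) by ring. rewrite sin_neg. ring. }
    rewrite sin_add_2PI_mul, Hsin, Rmult_1_l, neg_cos. field. lra.
Qed.

Lemma is_solution_reflect B A phi b : is_solution omega B A phi ->
  is_solution omega B A (fun t => 2 * half_pi b - phi (- t)).
Proof.
  intro H. apply (is_solution_affine B A B A phi _ (-1) (-1) 0 (2 * half_pi b) H).
  - intro t. replace (-1 * t + 0) with (- t) by ring. ring.
  - intros t x. unfold field.
    replace (-1 * x + 2 * half_pi b) with (2 * half_pi b - x) by ring.
    replace (-1 * t + 0) with (- t) by ring.
    rewrite sin_2half_pi_sub, cos_neg.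
    field. lra.
Qed.

Lemma rotation_number_quasiperiodic B A r phi m :
  rotation_number_is omega B A r -> is_solution omega B A phi ->
  (forall t, phi (t + 2 * PI) = phi t + 2 * PI * IZR m) -> r = IZR m.
Proof.
  intros [_ Hlim] Hphi Hper.
  assert (Hk : forall k, phi (2 * PI * INR k) = IZR m * (2 * PI * INR k) + phi 0).
  { induction k as [|k IH].
    - simpl. rewrite Rmult_0_r. ring.
    - rewrite S_INR, Rmult_plus_distr_l, Rmult_1_r, Hper, IH. ring. }
  assert (Hm : is_lim_seq (fun k => phi (2 * PI * INR k) / (2 * PI * INR k)) (IZR m)).
  { apply (is_lim_seq_div_bounded_diff (fun k => IZR m * (2 * PI * INR k)) _ _ (Rabs (phi 0)));
      [apply is_lim_seq_2PI_INR | intro k; rewrite Hk; right; f_equal; ring |].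
    apply is_lim_seq_ext_loc with (u := fun _ => IZR m); [|apply is_lim_seq_const].
    exists 1%nat. intros k Hk1.
    assert (0 < INR k) by (apply lt_0_INR; lia). pose proof PI_RGT_0. field. lra. }
  apply is_lim_seq_unique in Hm. rewrite (is_lim_seq_unique _ _ (Hlim phi Hphi)) in Hm.
  now injection Hm.
Qed.

Lemma rotation_number_half_turn B A r e : e = 1 \/ e = -1 ->
  rotation_number_is omega B A r ->
  rotation_number_is omega (e * B) (- (e * A)) (e * r).
Proof.
  intros he [[phi0 Hphi0] Hlim]. split.
  - eexists. exact (is_solution_half_turn B A phi0 e 0 he Hphi0).
  - intros psi Hpsi.
    set (phi := fun t => e * psi (t + PI) + 2 * PI * IZR 0).
    assert (Hphi : is_solution omega B A phi).
    { pose proof (is_solution_half_turn _ _ psi e 0 he Hpsi) as H.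
      replace (e * (e * B)) with B in H by (destruct he as [-> | ->]; ring).
      replace (- (e * - (e * A))) with A in H by (destruct he as [-> | ->]; ring).
      exact H. }
    assert (Hpsi_phi : forall t, psi t = e * phi (t - PI)).
    { intro t. unfold phi. replace (t - PI + PI) with t by ring.
      destruct he as [-> | ->]; simpl; ring. }
    destruct (is_solution_lipschitz B A phi Hphi) as [C HC].
    apply (is_lim_seq_div_bounded_diff (fun k => e * phi (2 * PI * INR k)) _ _ (C * PI));
      [apply is_lim_seq_2PI_INR | |].
    + intro k. rewrite Hpsi_phi, <- Rmult_minus_distr_l, Rabs_mult.
      assert (He : Rabs e = 1)
        by (destruct he as [-> | ->]; [apply Rabs_R1 | rewrite Rabs_left; lra]).
      rewrite He, Rmult_1_l. eapply Rle_trans; [apply HC|].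
      replace (2 * PI * INR k - PI - 2 * PI * INR k) with (- PI) by ring.
      rewrite Rabs_Ropp, Rabs_right; [lra | left; apply PI_RGT_0].
    + apply is_lim_seq_ext with (u := fun k => e * (phi (2 * PI * INR k) / (2 * PI * INR k))).
      { intro k. unfold Rdiv. ring. }
      now apply (is_lim_seq_scal_l _ e r), Hlim.
Qed.

Lemma fixes_mod_quasiperiodic B A x : fixes_mod omega B A x ->
  exists m phi, is_solution omega B A phi /\ phi 0 = x /\
    forall t, phi (t + 2 * PI) = phi t + 2 * PI * IZR m.
Proof.
  intros [m [phi [Hphi [H0 H2PI]]]]. exists m, phi. split; [exact Hphi|]. split; [exact H0|].
  intro t.
  assert (U := is_solution_unique B A _ phi 0 (is_solution_shift_2PI B A phi (- m) Hphi) Hphi).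
  cbv beta in U. rewrite Rplus_0_l, H2PI, H0, opp_IZR in U.
  specialize (U ltac:(ring) t). lra.
Qed.

Lemma quasiperiodic_at_PI B A phi b m : is_solution omega B A phi ->
  phi 0 = half_pi b -> (forall t, phi (t + 2 * PI) = phi t + 2 * PI * IZR m) ->
  phi PI = half_pi b + PI * IZR m.
Proof.
  intros Hphi H0 Hper.
  assert (U := is_solution_unique B A _ phi 0 (is_solution_reflect B A phi b Hphi) Hphi).
  cbv beta in U. rewrite Ropp_0, H0 in U.
  specialize (U ltac:(ring) PI). specialize (Hper (- PI)).
  replace (- PI + 2 * PI) with PI in Hper by ring. lra.
Qed.

Lemma bdry_quasiperiodic s b B A : bdry omega s b B A ->
  exists phi, is_solution omega B A phi /\ phi PI = half_pi b + PI * IZR s /\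
    forall t, phi (t + 2 * PI) = phi t + 2 * PI * IZR s.
Proof.
  intros [HL Hfix].
  destruct (fixes_mod_quasiperiodic B A _ Hfix) as [m [phi [Hphi [H0 Hper]]]].
  assert (Hs : IZR s = IZR m) by exact (rotation_number_quasiperiodic B A _ phi m HL Hphi Hper).
  apply eq_IZR in Hs. subst m.
  exists phi. split; [exact Hphi|]. split; [|exact Hper].
  exact (quasiperiodic_at_PI B A phi b s Hphi H0 Hper).
Qed.

Lemma bdry_half_turn s s' b b' B A e : e = 1 \/ e = -1 -> IZR s' = e * IZR s ->
  (exists j, half_pi b' = e * (half_pi b + PI * IZR s) + 2 * PI * IZR j) ->
  bdry omega s b B A -> bdry omega s' b' (e * B) (- (e * A)).
Proof.
  intros he Hs' [j Hj] Hb.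
  destruct (bdry_quasiperiodic s b B A Hb) as [phi [Hphi [HPI Hper]]]. split.
  - unfold L. rewrite Hs'. exact (rotation_number_half_turn B A _ e he (proj1 Hb)).
  - exists s', (fun t => e * phi (t + PI) + 2 * PI * IZR j).
    split; [exact (is_solution_half_turn B A phi e j he Hphi)|]. split.
    + rewrite Rplus_0_l, HPI, Hj. ring.
    + rewrite (Rplus_comm (2 * PI) PI), Hper, HPI, Hj, Hs'. ring.
Qed.

Lemma bdry_opp_A s b B A :
  bdry omega s b B A -> bdry omega s (xorb (Z.odd s) b) B (- A).
Proof.
  intro Hb.
  replace B with (1 * B) by ring. replace (- A) with (- (1 * A)) by ring.
  apply (bdry_half_turn s s b _ B A 1); [now left | ring | | exact Hb].
  destruct (half_pi_add_PI_mul s b) as [j Hj]. exists j. rewrite Hj. ring.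
Qed.

Lemma bdry_opp_B s b B A :
  bdry omega s b B A -> bdry omega (- s) (negb (xorb (Z.odd s) b)) (- B) A.
Proof.
  intro Hb.
  replace (- B) with (-1 * B) by ring. replace A with (- (-1 * A)) by ring.
  apply (bdry_half_turn s (- s) b _ B A (-1)); [now right | rewrite opp_IZR; ring | | exact Hb].
  destruct (half_pi_add_PI_mul s b) as [j Hj]. exists (- j)%Z.
  rewrite half_pi_negb, Hj, opp_IZR. ring.
Qed.

Lemma bdry_opp_A_iff s b B A :
  bdry omega s b B A <-> bdry omega s (xorb (Z.odd s) b) B (- A).
Proof.
  split; [apply bdry_opp_A|]. intro H.
  apply bdry_opp_A in H. rewrite Ropp_involutive in H.
  now destruct (Z.odd s), b.
Qed.

Lemma bdry_opp_B_iff s b B A :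
  bdry omega s b B A <-> bdry omega (- s) (negb (xorb (Z.odd s) b)) (- B) A.
Proof.
  split; [apply bdry_opp_B|]. intro H.
  apply bdry_opp_B in H.
  rewrite Z.opp_involutive, Ropp_involutive, Z.odd_opp in H.
  now destruct (Z.odd s), b.
Qed.

End FixedFrequency.

Theorem theorem1p21 (omega : R) (homega : 0 < omega) (s : Z) :
  (* (B,A) -> (B,-A) preserves each dL_{s,+-} for even s *)
  (Z.Even s -> forall (b : bool) (B A : R),
      bdry omega s b B A <-> bdry omega s b B (- A)) /\
  (* (B,A) -> (B,-A) interchanges dL_{s,+} and dL_{s,-} for odd s *)
  (Z.Odd s -> forall (b : bool) (B A : R),
      bdry omega s b B A <-> bdry omega s (negb b) B (- A)) /\
  (* for even s, dL_{s,+-} (graph of B = g(A)) is orthogonal to the B-axis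
     at the growth point A = 0 *)
  (Z.Even s -> forall (b : bool) (g : R -> R),
      (forall B A : R, bdry omega s b B A <-> B = g A) ->
      ex_derive g 0 -> is_derive g 0 0) /\
  (* (B,A) -> (-B,A) maps dL_{s,+-} onto dL_{-s,-+} for even s *)
  (Z.Even s -> forall (b : bool) (B A : R),
      bdry omega s b B A <-> bdry omega (- s)%Z (negb b) (- B) A) /\
  (* (B,A) -> (-B,A) maps dL_{s,+-} onto dL_{-s,+-} for odd s *)
  (Z.Odd s -> forall (b : bool) (B A : R),
      bdry omega s b B A <-> bdry omega (- s)%Z b (- B) A).
Proof.
  assert (Heven : Z.Even s -> Z.odd s = false).
  { intro He. apply Z.even_spec in He. now rewrite <- Z.negb_even, He. }
  assert (Hodd : Z.Odd s -> Z.odd s = true) by apply Z.odd_spec.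
  split; [|split; [|split; [|split]]].
  - intros He b B A. rewrite (bdry_opp_A_iff omega homega), (Heven He). reflexivity.
  - intros Ho b B A. rewrite (bdry_opp_A_iff omega homega), (Hodd Ho). reflexivity.
  - intros He b g Hg Hg'. apply is_derive_0_of_even; [|exact Hg'].
    intro x. symmetry. apply Hg.
    rewrite (bdry_opp_A_iff omega homega), (Heven He), Ropp_involutive. now apply Hg.
  - intros He b B A. rewrite (bdry_opp_B_iff omega homega), (Heven He). reflexivity.
  - intros Ho b B A. rewrite (bdry_opp_B_iff omega homega), (Hodd Ho).
    now destruct b.
Qed.
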